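(* Let $k>0$ be real, let $M=\begin{bmatrix} k-1 & k-1 & k\\ 1&0&0\\ 0&1&0\end{bmatrix}$ and $$N_0=\begin{bmatrix} k-1 & 2k & 2k\\ 2 & 1-k & 2\\ \frac{2}{k} & \frac{2}{k} & -\frac{1}{k}(k^2+k-2)\end{bmatrix}.$$ For every integer $n\ge 1$, $$N_0M^{n}=\begin{bmatrix} j_{n+1} & t_{n-1} & kj_{n}\\ j_{n} & t_{n-2} & kj_{n-1}\\ j_{n-1} & t_{n-3} & kj_{n-2}\end{bmatrix},$$ where $t_{m}=(k-1)j_{m+1}+kj_{m}$ for every integer $m$.
   Context: For real $k>0$, the third-order $k$-Jacobsthal--Lucas sequence $(j_n)=(j_n^{(3)}(k))$ is defined by $j_0=2$, $j_1=k-1$, $j_2=k^2+1$ and $j_{n+3}=(k-1)j_{n+2}+(k-1)j_{n+1}+kj_n$. It is extended to all negative indices by running this recurrence backwards, i.e. $j_{m}=\frac{1}{k}\left(j_{m+3}-(k-1)j_{m+2}-(k-1)j_{m+1}\right)$. *)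

From HB Require Import structures.
From mathcomp Require Import all_boot all_order all_algebra.
From mathcomp Require Import reals.
Set Implicit Arguments. Unset Strict Implicit. Unset Printing Implicit Defensive.
Import Order.TTheory GRing.Theory Num.Theory.
Local Open Scope ring_scope.

Section JL.
Variable R : realType.
Variable k : R.

(* forward state: (j_n, j_{n+1}, j_{n+2}) *)
Fixpoint jfwd (n : nat) : R * R * R :=
  match n with
  | O => (2, k - 1, k ^+ 2 + 1)
  | S m => let: (a, b, c) := jfwd m in
           (b, c, (k - 1) * c + (k - 1) * b + k * a)
  end.

(* backward state: (j_{-n}, j_{-n+1}, j_{-n+2}) *)
Fixpoint jbwd (n : nat) : R * R * R :=
  match n with
  | O => (2, k - 1, k ^+ 2 + 1)
  | S m => let: (a, b, c) := jbwd m in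
           ((c - (k - 1) * b - (k - 1) * a) / k, a, b)
  end.

Definition jl (m : int) : R :=
  match m with
  | Posz n => (jfwd n).1.1
  | Negz n => (jbwd n.+1).1.1
  end.

Definition tl (m : int) : R := (k - 1) * jl (m + 1) + k * jl m.
End JL.

Definition mx3 (R : Type) (a b c d e f g h i : R) : 'M[R]_3 :=
  \matrix_(r < 3, s < 3)
    nth a (nth [:: a; b; c] [:: [:: a; b; c]; [:: d; e; f]; [:: g; h; i]] r) s.

Definition Mk (R : realType) (k : R) : 'M[R]_3 :=
  mx3 (k - 1) (k - 1) k
      1 0 0
      0 1 0.

Definition N0k (R : realType) (k : R) : 'M[R]_3 :=
  mx3 (k - 1) (2 * k) (2 * k)
      2 (1 - k) 2
      (2 / k) (2 / k) (- (k ^+ 2 + k - 2) / k).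

From mathcomp Require Import all_boot all_order all_algebra reals.
From mathcomp Require Import ring zify.
Import GRing.Theory Num.Theory.
Local Open Scope ring_scope.
Set Implicit Arguments. Unset Strict Implicit.

(* Right multiplication by M sends a row (x, y, z) to ((k-1)x + y, (k-1)x + z, kx).
   On a row (j_{m+1}, t_{m-1}, k j_m) the first entry becomes j_{m+2} by the
   recurrence and the second becomes t_m by definition, so right multiplication
   by M shifts the claimed matrix from n to n + 1.  For n = 0 the claimed matrix
   is N_0 itself, as one checks from j_{-1}, j_{-2}, j_{-3}, which the backward
   recurrence gives explicitly. *)

Section JacobsthalLucas.
Variables (R : realType) (k : R).

Lemma jfwd_rec (n : nat) :
  (jfwd k n.+3).1.1 =
  (k - 1) * (jfwd k n.+2).1.1 + (k - 1) * (jfwd k n.+1).1.1 + k * (jfwd k n).1.1.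
Proof. by rewrite /=; case: (jfwd k n) => [[a b] c]. Qed.

Lemma jbwdE (p : nat) :
  jbwd k p = (jl k (- p%:Z), jl k (- p%:Z + 1), jl k (- p%:Z + 2)).
Proof.
elim: p => [//|p IH]; rewrite [LHS]/= IH; congr (_, _, _).
- by rewrite [RHS]/= IH.
- by congr (jl k _); lia.
- by congr (jl k _); lia.
Qed.

Lemma mx3_mul_Mk (a b c d e f g h i : R) :
  mx3 a b c d e f g h i *m Mk k =
  mx3 ((k - 1) * a + b) ((k - 1) * a + c) (k * a)
      ((k - 1) * d + e) ((k - 1) * d + f) (k * d)
      ((k - 1) * g + h) ((k - 1) * g + i) (k * g).
Proof.
apply/matrixP => r s; rewrite !mxE !big_ord_recr big_ord0 /= !mxE.
by case: r => [[|[|[|r]]] Hr]; case: s => [[|[|[|s]]] Hs] //=; ring.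
Qed.

Definition JLmx (m : int) : 'M[R]_3 :=
  mx3 (jl k (m + 1)) (tl k (m - 1)) (k * jl k m)
      (jl k m)       (tl k (m - 2)) (k * jl k (m - 1))
      (jl k (m - 1)) (tl k (m - 3)) (k * jl k (m - 2)).

Hypothesis k_neq0 : k != 0.

Lemma jl_rec (m : int) :
  jl k (m + 3) = (k - 1) * jl k (m + 2) + (k - 1) * jl k (m + 1) + k * jl k m.
Proof.
case: m => [n|p]; first by rewrite -!PoszD !addnS addn0 -jfwd_rec.
have -> : Negz p + 3 = - p%:Z + 2 by lia.
have -> : Negz p + 2 = - p%:Z + 1 by lia.
have -> : Negz p + 1 = - p%:Z by lia.
by rewrite [jl k (Negz p)]/= jbwdE /=; field.
Qed.

Lemma jl_tl_rec (m : int) : jl k (m + 1) = (k - 1) * jl k m + tl k (m - 2).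
Proof.
have [e3 e2 e1] : [/\ m - 2 + 3 = m + 1, m - 2 + 2 = m & m - 2 + 1 = m - 1].
  by split; lia.
by rewrite /tl -e3 jl_rec e2 e1; ring.
Qed.

Lemma JLmx_mul_Mk (m : int) : JLmx m *m Mk k = JLmx (m + 1).
Proof.
have [e1 e2 e3] : [/\ m + 1 - 1 = m, m + 1 - 2 = m - 1 & m + 1 - 3 = m - 2].
  by split; lia.
rewrite mx3_mul_Mk /JLmx e1 e2 e3; congr mx3.
- by rewrite [RHS]jl_tl_rec e2.
- by rewrite jl_tl_rec.
- by rewrite /tl subrK.
- by rewrite -[m in RHS](subrK 1) jl_tl_rec (_ : m - 1 - 2 = m - 3) //; lia.
- by rewrite /tl (_ : m - 2 + 1 = m - 1) //; lia.
Qed.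

Lemma N0k_JLmx0 : N0k k = JLmx 0.
Proof.
rewrite /N0k /JLmx /tl /jl /=.
by congr mx3; field; rewrite ?k_neq0 ?mulf_neq0 ?expf_neq0.
Qed.

End JacobsthalLucas.

(* The identity also holds for n = 0. *)
Theorem mainTheorem2 (R : realType) (k : R) (hk : 0 < k) (n : nat) (hn : (1 <= n)%N) :
  N0k k *m (Mk k) ^+ n =
  mx3 (jl k (n%:Z + 1)) (tl k (n%:Z - 1)) (k * jl k n%:Z)
      (jl k n%:Z)       (tl k (n%:Z - 2)) (k * jl k (n%:Z - 1))
      (jl k (n%:Z - 1)) (tl k (n%:Z - 3)) (k * jl k (n%:Z - 2)).
Proof.
have k_neq0 : k != 0 := lt0r_neq0 hk.
change (N0k k *m Mk k ^+ n = JLmx k n).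
elim: n {hn} => [|n IH]; first by rewrite expr0 mulmx1 N0k_JLmx0.
by rewrite exprSr -mulmxE mulmxA IH JLmx_mul_Mk // -[n.+1]addn1 PoszD.
Qed.
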